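(* Let $\Phi$ be a $(3,3)$-monotone formula with $n$ clauses and $n$ variables, and let $G_\Phi$ be the graph constructed from it as described in the context. Then the complement $\overline{G_\Phi}$ has no fall colouring using more than $\frac{7}{3}n$ colours.
   Context: A $(3,3)$-monotone formula is a set $C$ of clauses over a variable set $X$, where each clause consists of three distinct (positive, unnegated) variables and each variable occurs in exactly three clauses, so $|C|=|X|=n$. The graph $G_\Phi$ has $5n$ vertices: for each clause $c\in C$ with variables $x,y,z$ (in an arbitrary fixed order) there are vertices $c(x),c(y),c(z)$ ($c$-type) and $a_1^c,a_2^c$ ($a$-type) forming the path $c(x)\,a_1^c\,c(y)\,a_2^c\,c(z)$; and for each variable $x$ occurring in clauses $c,c',c''$, the three vertices $c(x),c'(x),c''(x)$ form a triangle. There are no other edges. A colouring of a graph is a map to $\mathbb{Z}^+$ with adjacent vertices receiving distinct colours; a fall colouring is a colouring in which every vertex is adjacent to a vertex of every colour used other than its own. $\overline{G}$ denotes the complement of $G$. *)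

From mathcomp Require Import all_boot.
Set Implicit Arguments. Unset Strict Implicit. Unset Printing Implicit Defensive.

Section Graphs.
Variable V : finType.

Definition complement (e : rel V) : rel V := fun u v => (u != v) && ~~ e u v.

Definition is_colouring (e : rel V) (f : V -> nat) : Prop :=
  (forall v, 0 < f v) /\ (forall u v, e u v -> f u != f v).

Definition colours_used (f : V -> nat) : seq nat := undup (codom f).
Definition ncolours (f : V -> nat) : nat := size (colours_used f).

Definition is_fall_colouring (e : rel V) (f : V -> nat) : Prop :=
  is_colouring e f /\
  (forall v k, k \in codom f -> k != f v -> exists u, e v u && (f u == k)).
End Graphs.

(* Clauses C, variables X; clause c has variables cl c 0, cl c 1, cl c 2 (in this fixed
   order, pairwise distinct); each variable occurs in exactly three clauses. *)
Definition monotone33 (C X : finType) (cl : C -> 'I_3 -> X) : Prop :=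
  (forall c, injective (cl c)) /\
  (forall x : X, #|[set c : C | x \in codom (cl c)]| = 3).

(* Vertices of G_Phi: inl (c,i) is the c-type vertex c(cl c i);
   inr (c,false) is a_1^c, inr (c,true) is a_2^c. *)
Definition GVert (C : finType) : finType := ((C * 'I_3) + (C * bool))%type.

(* path c(x) a1 c(y) a2 c(z): a1 ~ positions 0,1; a2 ~ positions 1,2 *)
Definition path_adj (C : finType) (c : C) (i : 'I_3) (c' : C) (b : bool) : bool :=
  (c == c') && (if b then (val i == 1) || (val i == 2) else (val i == 0) || (val i == 1)).

Definition G_edge (C X : finType) (cl : C -> 'I_3 -> X) : rel (GVert C) :=
  fun u v =>
    match u, v with
    | inl (c, i), inl (c', j) => (c != c') && (cl c i == cl c' j)   (* variable triangles *)
    | inl (c, i), inr (c', b) => path_adj c i c' b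
    | inr (c', b), inl (c, i) => path_adj c i c' b
    | inr _, inr _ => false
    end.

From mathcomp Require Import all_boot zify.
Set Implicit Arguments. Unset Strict Implicit. Unset Printing Implicit Defensive.

(* A colour class of a fall colouring of the complement of G_Phi is a clique of
   G_Phi, so it lies inside a variable triangle or a path edge c(x) a^c.  The fall
   condition forces every class to contain a c-type vertex, and every class without
   an a-type vertex to be a whole variable triangle.  With k colours of which p
   classes meet the 2n a-type vertices, counting the 3n c-type vertices gives
   3n >= p + 3(k - p) >= 3k - 4n. *)

Lemma sum_card_fibres (T : finType) (g : T -> nat) (s : seq nat) :
  uniq s -> (forall x, g x \in s) -> \sum_(j <- s) #|[set x | g x == j]| = #|T|.
Proof.
move=> s_uniq g_in_s.
under eq_bigr do rewrite -sum1_card big_mkcond /=.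
rewrite exchange_big /= -sum1_card; apply: eq_bigr => x _.
under eq_bigr do rewrite inE eq_sym.
by rewrite -big_mkcond /= sum1_count count_uniq_mem ?g_in_s.
Qed.

Lemma count_codom_le_card (T : finType) (g : T -> nat) (s : seq nat) :
  uniq s -> count (mem (codom g)) s <= #|T|.
Proof.
move=> s_uniq; rewrite -size_filter -(size_codom g).
by apply: uniq_leq_size; [exact: filter_uniq | move=> j; rewrite mem_filter => /andP[]].
Qed.

Section FallColouringOfComplement.
Variables (V : finType) (e : rel V) (f : V -> nat).
Hypotheses (e_sym : symmetric e) (f_fall : is_fall_colouring (complement e) f).

Lemma fall_compl_class_clique u w : f u = f w -> u != w -> e u w.
Proof.
case: f_fall => [[_ f_proper] _] fuw uw; apply/negPn/negP => not_euw.
by have := f_proper u w; rewrite /complement uw not_euw fuw eqxx => /(_ isT).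
Qed.

Lemma fall_compl_witness w v : e w v -> f v != f w ->
  exists u, [/\ f u = f w, u != w, e u w, u != v & ~~ e v u].
Proof.
move=> ewv fvw; case: f_fall => _ /(_ v (f w) (codom_f f w)).
rewrite eq_sym => /(_ fvw) [u /andP[/andP[vu not_evu] /eqP fuw]].
have uw : u != w by apply: contraNneq not_evu => ->; rewrite e_sym.
exists u; split=> //; first exact: fall_compl_class_clique.
by rewrite eq_sym.
Qed.

End FallColouringOfComplement.

Section GPhi.
Variables (C X : finType) (cl : C -> 'I_3 -> X).

Lemma G_edge_sym : symmetric (G_edge cl).
Proof.
case=> [[c i]|[c b]] [[c' j]|[c' b']] //=.
by rewrite eq_sym [cl c i == _]eq_sym.
Qed.

Lemma monotone33_third_clause c c1 i i1 : monotone33 cl ->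
  c1 != c -> cl c1 i1 = cl c i ->
  exists c2 i2, [/\ c2 != c, c2 != c1 & cl c2 i2 = cl c i].
Proof.
case=> _ /(_ (cl c i)); set S := [set d | _ \in _] => cardS c1c x1.
have cS : c \in S by rewrite inE codom_f.
have c1S : c1 \in S by rewrite inE -x1 codom_f.
have : 0 < #|S :\ c :\ c1|.
  by move: cardS; rewrite (cardsD1 c) cS (cardsD1 c1 (S :\ c)) in_setD1 c1c c1S; lia.
case/card_gt0P => c2; rewrite !inE => /and3P[c2c1 c2c /codomP[i2 x2]].
by exists c2, i2.
Qed.

Variable f : GVert C -> nat.
Hypothesis f_fall : is_fall_colouring (complement (G_edge cl)) f.

Let witness := fall_compl_witness G_edge_sym f_fall.

Lemma colour_class_has_c_vertex w : exists p, f (inl p) = f w.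
Proof.
case: w => [p|[c b]]; first by exists p.
pose i1 : 'I_3 := Ordinal (isT : 1 < 3).
have e_a_c : G_edge cl (inr (c, b)) (inl (c, i1)) by rewrite /= /path_adj eqxx; case: b.
have [fc|/(witness e_a_c) [[p|b'] [fp _ e_u _ _]]] :=
  eqVneq (f (inl (c, i1))) (f (inr (c, b))).
- by exists (c, i1).
- by exists p.
- by case: b' fp e_u.
Qed.

(* The class of [w] contains a clause-mate [u] of [w] (fall condition at the path
   neighbour of [w]); the third occurrence [v2] of the variable is either in the
   class or sees, by the fall condition, a third class member that is not [u]. *)
Lemma colour_class_without_a_vertex w : monotone33 cl ->
  (forall b, f (inr b) != f w) -> 2 < #|[set p | f (inl p) == f w]|.
Proof.
move=> Hphi no_a; case: w no_a => [[c i]|b] no_a; last by have := no_a b; rewrite eqxx.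
have e_c_a : G_edge cl (inl (c, i)) (inr (c, val i == 2)).
  by rewrite /= /path_adj eqxx; clear no_a; case: i => -[|[|[|k]]].
have [[[c1 i1]|b1] [fu1 _ e_u1 _ _]] := witness e_c_a (no_a _); last first.
  by have := no_a b1; rewrite fu1 eqxx.
have /andP[c1c /eqP x1] := e_u1.
have [c2 [i2 [c2c c2c1 x2]]] := monotone33_third_clause Hphi c1c x1.
have e_v2 : G_edge cl (inl (c, i)) (inl (c2, i2)) by rewrite /= eq_sym c2c x2 eqxx.
have e_v2_u1 : G_edge cl (inl (c1, i1)) (inl (c2, i2)) by rewrite /= eq_sym c2c1 x2 x1 eqxx.
apply/card_gt2P.
have [fv2|/(witness e_v2) [[[c3 i3]|b3] [fu3 u3w _ _ not_e_u3]]] :=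
  eqVneq (f (inl (c2, i2))) (f (inl (c, i))).
- exists (c, i), (c1, i1), (c2, i2); split; first by rewrite !inE fu1 fv2.
  split; [apply: contraNneq c1c | apply: contraNneq c2c1 | apply: contraNneq c2c];
    by move=> -[->].
- exists (c, i), (c1, i1), (c3, i3); split; first by rewrite !inE fu1 fu3.
  split; first by apply: contraNneq c1c => -[->].
  + by apply: contraNneq not_e_u3 => -[<- <-]; rewrite G_edge_sym.
  + by apply: contraNneq u3w => -[-> ->].
- by have := no_a b3; rewrite fu3 eqxx.
Qed.

Lemma colour_class_weight w : monotone33 cl ->
  3 <= #|[set p | f (inl p) == f w]| + 2 * (f w \in codom (fun b => f (inr b))).
Proof.
move=> Hphi; have [_|no_a] := boolP (f w \in codom _).
  have [p fp] := colour_class_has_c_vertex w.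
  by rewrite muln1 -[3]/(1 + 2) leq_add2r card_gt0; apply/set0Pn; exists p; rewrite inE fp.
rewrite muln0 addn0 colour_class_without_a_vertex // => b.
by apply: contraNneq no_a => <-; exact: codom_f.
Qed.

End GPhi.

Theorem mainTheorem19 (C X : finType) (n : nat) (cl : C -> 'I_3 -> X)
  (Hphi : monotone33 cl) (HC : #|C| = n) (HX : #|X| = n)
  (f : GVert C -> nat) (Hf : is_fall_colouring (complement (G_edge cl)) f) :
  3 * ncolours f <= 7 * n.
Proof.
set s := colours_used f; set A := codom (fun b : C * bool => f (inr b)).
have s_uniq : uniq s := undup_uniq _.
have f_in_s w : f w \in s by rewrite mem_undup codom_f.
have weights : 3 * size s <= \sum_(j <- s) (#|[set p | f (inl p) == j]| + 2 * (j \in A)).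
  rewrite -iter_addn_0 -count_predT -big_const_seq /= big_seq [leqRHS]big_seq.
  apply: leq_sum => j /[1!mem_undup] /codomP[w ->].
  exact: colour_class_weight Hf w Hphi.
have a_classes : count (mem A) s <= 2 * n.
  by rewrite -HC mulnC -card_bool -card_prod count_codom_le_card.
have count_a : \sum_(j <- s) (j \in A : nat) = count (mem A) s.
  by rewrite -sum1_count [RHS]big_mkcond.
move: weights; rewrite big_split /= sum_card_fibres // card_prod card_ord HC.
rewrite -big_distrr /= count_a /ncolours -/s; lia.
Qed.
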